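(* Let $t_T=\frac{K_TM_T}{N}$ and $t_R=\frac{K_RM_R}{N}$ be integers with $t_T\ge 1$ and $t_T+t_R\le K_R$, and consider the prefetching and subfile partition described in the context, for an arbitrary demand vector $\mathbf{d}$. Then the set of all small subfiles that need to be delivered, namely $W_{d_j,\mathcal{T},\pi,\pi'}$ (intended for $\text{Rx}_j$) for all $j\in[K_R]$, all $\mathcal{T}\subseteq[K_T]$ with $|\mathcal{T}|=t_T$, all $\mathcal{R}\subseteq[K_R]\setminus\{j\}$ with $|\mathcal{R}|=t_R$, all $\pi\in\Pi_{\mathcal{R}}$ and all $\pi'\in\Pi_{[K_R]\setminus(\mathcal{R}\cup\{j\}),t_T-1}$, can be partitioned into disjoint subsets of size $t_T+t_R$ as $$\bigcup_{\substack{\mathcal{T}\subseteq[K_T]:\ |\mathcal{T}|=t_T\\ \mathcal{R}\subseteq[K_R]:\ |\mathcal{R}|=t_T+t_R\\ \pi\in\Pi^{\mathrm{circ}}_{\mathcal{R}}}}\left\{W_{d_{\pi(l)},\ \mathcal{T}\oplus_{K_T}(l-1),\ \pi[l+1:l+t_R],\ \pi[l+t_R+1:l+t_R+t_T-1]}\ :\ l\in[t_T+t_R]\right\}.$$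
   Context: Setting: $K_T$ transmitters, $K_R$ receivers, a library of $N$ files $W_1,\dots,W_N$ of $F$ packets each ($F$ large enough for all divisions below to be integral), transmitter cache size $M_TF$ packets and receiver cache size $M_RF$ packets. Prefetching: each file $W_n$ is split into $\binom{K_T}{t_T}\binom{K_R}{t_R}$ disjoint equal-size subfiles $W_{n,\mathcal{T},\mathcal{R}}$, one for each $\mathcal{T}\subseteq[K_T]$ with $|\mathcal{T}|=t_T$ and $\mathcal{R}\subseteq[K_R]$ with $|\mathcal{R}|=t_R$. Transmitter $\text{Tx}_i$ caches all $W_{n,\mathcal{T},\mathcal{R}}$ with $i\in\mathcal{T}$; receiver $\text{Rx}_j$ caches all $W_{n,\mathcal{T},\mathcal{R}}$ with $j\in\mathcal{R}$. Receiver $\text{Rx}_j$ requests file $W_{d_j}$ and must receive the subfiles $W_{d_j,\mathcal{T},\mathcal{R}}$ with $j\notin\mathcal{R}$. Notation: for a set $\mathcal{S}$, $\Pi_{\mathcal{S}}$ is the set of permutations (orderings) of $\mathcal{S}$, and for $1\le t\le|\mathcal{S}|$, $\Pi_{\mathcal{S},t}=\bigcup_{\mathcal{A}\subseteq\mathcal{S},|\mathcal{A}|=t}\Pi_{\mathcal{A}}$. $\Pi^{\mathrm{circ}}_{\mathcal{R}}$ is the set of $(|\mathcal{R}|-1)!$ circular permutations of $\mathcal{R}$, each written as a list $\pi=[\pi(1),\dots,\pi(|\mathcal{R}|)]$. For integers $i,j,m$, $i\oplus_m j=1+((i+j-1)\bmod m)$; for a set $\mathcal{T}$, $\mathcal{T}\oplus_m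 j$ is the entrywise application of this operation. For a permutation $\pi$ of a set $\mathcal{S}$ and $j\ge i$, $\pi[i:j]=[\pi(i\oplus_{|\mathcal{S}|}0),\pi(i\oplus_{|\mathcal{S}|}1),\dots,\pi(i\oplus_{|\mathcal{S}|}(j-i))]$. Further partition: for each $j\in[K_R]$, each $\mathcal{T}\subseteq[K_T]$ with $|\mathcal{T}|=t_T$ and each $\mathcal{R}\subseteq[K_R]\setminus\{j\}$ with $|\mathcal{R}|=t_R$, the subfile $W_{d_j,\mathcal{T},\mathcal{R}}$ (to be delivered to $\text{Rx}_j$) is split into $\frac{t_R!\,[K_R-(t_R+1)]!}{[K_R-(t_R+t_T)]!}$ disjoint equal-size smaller subfiles $W_{d_j,\mathcal{T},\pi,\pi'}$, indexed by $\pi\in\Pi_{\mathcal{R}}$ and $\pi'\in\Pi_{[K_R]\setminus(\mathcal{R}\cup\{j\}),t_T-1}$. *)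

(* Indices are 0-based ordinals: transmitter i+1 of the paper
   is the ordinal i : 'I_KT, receiver j+1 is j : 'I_KR, and list positions are
   0-based (paper's pi(l) is nth _ pi (l-1)). *)
From mathcomp Require Import all_boot.
Set Implicit Arguments.
Unset Strict Implicit.
Unset Printing Implicit Defensive.

Definition is_ordering (K : nat) (S : {set 'I_K}) (p : seq 'I_K) : bool :=
  uniq p && ([set x in p] == S).

Definition Pi_t (K : nat) (S : {set 'I_K}) (t : nat) (p : seq 'I_K) : bool :=
  [&& uniq p, size p == t & all (fun x => x \in S) p].

(* Circular permutations of R: one representative list per rotation class,
   namely the ordering of R starting with its least element. *)
Definition circ_perm (K : nat) (R : {set 'I_K}) (p : seq 'I_K) : bool :=
  is_ordering R p &&
  (if p is x :: _ then all (fun y : 'I_K => (nat_of_ord x <= nat_of_ord y)%N) p else true).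

(* T (+)_K a, entrywise cyclic shift by a (0-based version of
   i |-> 1 + ((i + a - 1) mod K)). *)
Definition oplus_set (K : nat) (T : {set 'I_K}) (a : nat) : {set 'I_K} :=
  [set x : 'I_K | [exists i in T, (x : nat) == ((i + a) %% K)%N]].

(* slice p i len = [p(i (+) 0), ..., p(i (+) (len-1))]  (indices mod |p|),
   i.e. the paper's pi[i : i+len-1]; empty when len = 0. *)
Definition slice (A : Type) (p : seq A) (i len : nat) : seq A :=
  match p with
  | [::] => [::]
  | x0 :: _ => [seq nth x0 p ((i + a) %% size p) | a <- iota 0 len]
  end.

(* A small subfile W_{d_j, T, pi, pi'} delivered to Rx_j is identified by
   (j, T, pi, pi'). *)
Definition item (KT KR : nat) : Type :=
  ('I_KR * {set 'I_KT} * seq 'I_KR * seq 'I_KR)%type.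

Definition subfile_idx (KT KR tT tR : nat) (x : item KT KR) : bool :=
  let: (j, T, p, p') := x in
  [&& #|T| == tT, uniq p, size p == tR, j \notin p &
      Pi_t (~: ([set y in p] :|: [set j])) tT.-1 p'].

(* Element number l (0-based, paper's l = l0 + 1) of the block indexed by
   (T, R, pi):  W_{d_{pi(l)}, T (+) (l-1), pi[l+1 : l+tR],
                  pi[l+tR+1 : l+tR+tT-1]}.  None only if pi is empty. *)
Definition blk (KT KR tT tR : nat) (T : {set 'I_KT}) (p : seq 'I_KR)
    (l : nat) : option (item KT KR) :=
  match p with
  | [::] => None
  | x0 :: _ => Some (nth x0 p l, oplus_set T l,
                     slice p (l + 1) tR, slice p (l + 1 + tR) tT.-1)
  end.

Definition blk_idx (KT KR tT tR : nat) (T : {set 'I_KT}) (R : {set 'I_KR})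
    (p : seq 'I_KR) : bool :=
  [&& #|T| == tT, #|R| == tT + tR & circ_perm R p].

From mathcomp Require Import all_boot zify.
Set Implicit Arguments.
Unset Strict Implicit.
Unset Printing Implicit Defensive.

(* Reading the three components of element l of the block (T, pi) one after
   the other spells the rotation of pi that starts at position l, and its
   transmitter set is T shifted by l.  Conversely, a small subfile
   (j, T, pi, pi') yields the duplicate-free list j :: pi ++ pi' of length
   tT + tR, which is the rotation of exactly one circular permutation (the one
   starting with its least element) by exactly one offset l; T is recovered by
   shifting back by l. *)

Section Rotations.
Variable A : Type.
Implicit Types (s : seq A).

Lemma nth_rot x0 s k i : k < size s -> i < size s ->
  nth x0 (rot k s) i = nth x0 s ((k + i) %% size s).
Proof.
move=> ltk lti; rewrite /rot nth_cat size_drop.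
case: ltnP => hi; first by rewrite nth_drop modn_small //; lia.
have -> : k + i = (i - (size s - k)) + size s by lia.
by rewrite modnDr modn_small ?nth_take //; lia.
Qed.

Lemma rotr_mod s k : k <= size s -> rotr k s = rot ((size s - k) %% size s) s.
Proof.
rewrite /rotr; case: (posnP k) => [-> _ | k_gt0 lek].
  by rewrite subn0 modnn rot0 rot_size.
by rewrite modn_small //; lia.
Qed.

Lemma size_slice s i a : 0 < size s -> size (slice s i a) = a.
Proof. by case: s => //= x s _; rewrite size_map size_iota. Qed.

Lemma slice_cat s i a b : slice s i (a + b) = slice s i a ++ slice s (i + a) b.
Proof.
case: s => [|x s] //=; rewrite iotaD map_cat add0n; congr (_ ++ _).
rewrite -{1}(addn0 a) iotaDl -map_comp; apply: eq_map => c /=.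
by rewrite addnA.
Qed.

Lemma slice_size s i : slice s i (size s) = rot (i %% size s) s.
Proof.
case: s => [|x s'] //; set s := x :: s'.
apply: (@eq_from_nth _ x); first by rewrite size_slice // size_rot.
rewrite size_slice // => j ltj.
rewrite /slice /s -/s (nth_map 0) ?size_iota // nth_iota // add0n.
by rewrite nth_rot ?ltn_pmod // modnDml.
Qed.

Lemma rot_slices x0 s l a b : size s = (a + b).+1 -> l < size s ->
  rot l s = nth x0 s l :: slice s (l + 1) a ++ slice s (l + 1 + a) b.
Proof.
move=> sz_s lt_l.
have <- : slice s l (size s) = rot l s by rewrite slice_size modn_small.
rewrite sz_s -add1n !slice_cat -cat1s; congr (_ ++ _).
case: s lt_l {sz_s} => [|y s] // lt_l.
by rewrite /slice /= addn0 (modn_small lt_l) (set_nth_default x0).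
Qed.

End Rotations.

Lemma rot_head_inj (T : eqType) (x0 : T) (s : seq T) k1 k2 :
  uniq s -> k1 < size s -> k2 < size s ->
  nth x0 (rot k1 s) 0 = nth x0 (rot k2 s) 0 -> k1 = k2.
Proof.
move=> uniq_s lt1 lt2; have s_gt0 : 0 < size s := leq_ltn_trans (leq0n _) lt1.
rewrite !nth_rot // !addn0 !modn_small // => /eqP.
by rewrite nth_uniq // => /eqP.
Qed.

Section CircularPermutations.
Variable K : nat.
Implicit Types (R : {set 'I_K}) (p q : seq 'I_K).

Lemma size_ordering R p : is_ordering R p -> size p = #|R|.
Proof. by case/andP=> uniq_p /eqP <-; rewrite cardsE (card_uniqP uniq_p). Qed.

Lemma circ_perm_rot_inj R1 R2 p1 p2 l1 l2 :
  circ_perm R1 p1 -> circ_perm R2 p2 -> l1 < size p1 -> l2 < size p2 ->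
  rot l1 p1 = rot l2 p2 -> p1 = p2.
Proof.
case/andP=> /andP [uniq1 _] min1 /andP [/andP [uniq2 _] min2] lt1 lt2 rotE.
have memE : p1 =i p2 by move=> y; rewrite -(mem_rot l1) rotE mem_rot.
case: p1 => [//|x1 s1] in uniq1 min1 lt1 rotE memE *.
case: p2 => [//|x2 s2] in uniq2 min2 lt2 rotE memE *.
have x12 : x1 = x2.
  apply/val_inj/eqP; rewrite eqn_leq.
  by rewrite (allP min1) ?memE ?mem_head // (allP min2) -?memE ?mem_head.
set q := rot l2 (x2 :: s2); set n := size q.
have n_gt0 : 0 < n by rewrite /n size_rot.
have p1E : x1 :: s1 = rot ((n - l1) %% n) q.
  by rewrite -rotr_mod /n /q -rotE ?rotK // size_rot ltnW.
have p2E : x2 :: s2 = rot ((n - l2) %% n) q.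
  by rewrite -rotr_mod /n /q ?rotK // size_rot ltnW.
rewrite p1E [RHS]p2E; congr rot; apply: (@rot_head_inj _ x1 q); rewrite ?ltn_pmod //.
- by rewrite /q rot_uniq.
- by rewrite -p1E -p2E x12.
Qed.

Lemma circ_perm_rot_exists q : uniq q -> 0 < size q ->
  exists p l, [/\ circ_perm [set y in q] p, l < size p & rot l p = q].
Proof.
case: q => [//|x s] uniq_q _; set q := x :: s.
case: (@arg_minnP _ x (mem q) val (mem_head x s)) => m q_m min_m.
set k := index m q; have lt_k : k < size q by rewrite index_mem.
have n_gt0 : 0 < size q by [].
exists (rot k q), ((size q - k) %% size q); split.
- rewrite /circ_perm /is_ordering rot_uniq uniq_q.
  apply/andP; split; first by apply/eqP/setP => y; rewrite !inE mem_rot.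
  case E : (rot k q) => [//|y t]; rewrite -E.
  have -> : y = m by have := nth_rot m lt_k n_gt0; rewrite E addn0 modn_small // nth_index.
  by apply/allP => z; rewrite mem_rot => /min_m.
- by rewrite size_rot ltn_pmod.
- by rewrite -(size_rot k) -rotr_mod ?rotK // size_rot ltnW.
Qed.

End CircularPermutations.

Section CyclicShift.
Variable K : nat.
Implicit Types (T : {set 'I_K}) (x : 'I_K).

Definition cshift (a : nat) x : 'I_K :=
  Ordinal (ltn_pmod (x + a) (leq_ltn_trans (leq0n x) (ltn_ord x))).

Lemma oplus_setE T a : oplus_set T a = cshift a @: T.
Proof.
apply/setP => x; rewrite in_set; apply/existsP/imsetP.
  by case=> i /andP [Ti /eqP xE]; exists i => //; apply: val_inj.
by case=> i Ti ->; exists i; rewrite Ti /=.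
Qed.

Lemma modn_add_complement a : 0 < K -> (a + (K - a %% K)) %% K = 0.
Proof.
move=> K_gt0; rewrite -modnDml subnKC ?modnn //.
exact: ltnW (ltn_pmod a K_gt0).
Qed.

Lemma cshiftK a : cancel (cshift a) (cshift (K - a %% K)).
Proof.
move=> x; have K_gt0 : 0 < K := leq_ltn_trans (leq0n x) (ltn_ord x).
apply: val_inj => /=.
by rewrite modnDml -addnA -modnDmr modn_add_complement // addn0 modn_small.
Qed.

Lemma cshiftKV a : cancel (cshift (K - a %% K)) (cshift a).
Proof.
move=> x; have K_gt0 : 0 < K := leq_ltn_trans (leq0n x) (ltn_ord x).
apply: val_inj => /=.
rewrite modnDml -addnA [_ + a]addnC -modnDmr modn_add_complement //.
by rewrite addn0 modn_small.
Qed.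

Lemma card_oplus_set T a : #|oplus_set T a| = #|T|.
Proof. by rewrite oplus_setE card_imset //; apply: can_inj (cshiftK a). Qed.

Lemma oplus_setK a :
  cancel (fun T => @oplus_set K T a) (fun T => oplus_set T (K - a %% K)).
Proof.
move=> T; rewrite !oplus_setE -imset_comp -[RHS]imset_id.
by apply: eq_imset => x /=; rewrite cshiftK.
Qed.

Lemma oplus_setKV a :
  cancel (fun T => @oplus_set K T (K - a %% K)) (fun T => oplus_set T a).
Proof.
move=> T; rewrite !oplus_setE -imset_comp -[RHS]imset_id.
by apply: eq_imset => x /=; rewrite cshiftKV.
Qed.

End CyclicShift.

Lemma subfile_idxE KT KR tT tR j (T : {set 'I_KT}) (p p' : seq 'I_KR) :
  subfile_idx tT tR (j, T, p, p') =
  [&& #|T| == tT, uniq (j :: p ++ p'), size p == tR & size p' == tT.-1].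
Proof.
have avoid : all (fun x => x \in ~: ([set y in p] :|: [set j])) p' =
             ~~ has (mem p) p' && (j \notin p').
  elim: p' => //= y p' ->; rewrite !inE [y == j]eq_sym.
  by case: (y \in p); case: (j == y); case: (has _ p'); case: (j \in p').
rewrite /subfile_idx /Pi_t avoid cons_uniq mem_cat cat_uniq.
by case: (#|T| == tT); case: (uniq p); case: (size p == tR); case: (j \in p);
   case: (j \in p'); case: (uniq p'); case: (size p' == tT.-1); case: (has _ p').
Qed.

Section Blocks.
Variables (KT KR tT tR : nat).
Hypothesis tT_gt0 : 0 < tT.

Lemma blk_rot (T : {set 'I_KT}) (p : seq 'I_KR) l :
  size p = tT + tR -> l < size p ->
  exists j pi pi', [/\ blk tT tR T p l = Some (j, oplus_set T l, pi, pi'),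
                       rot l p = j :: pi ++ pi', size pi = tR & size pi' = tT.-1].
Proof.
case: p => [//|x s] sz_p lt_l.
exists (nth x (x :: s) l), (slice (x :: s) (l + 1) tR),
       (slice (x :: s) (l + 1 + tR) tT.-1); split; rewrite ?size_slice //.
by apply: rot_slices; rewrite sz_p; lia.
Qed.

Lemma blk_subfile (T : {set 'I_KT}) (R : {set 'I_KR}) p l :
  blk_idx tT tR T R p -> l < tT + tR ->
  exists2 x, blk tT tR T p l = Some x & subfile_idx tT tR x.
Proof.
case/and3P=> /eqP card_T /eqP card_R /andP [ord_p _] lt_l.
have sz_p : size p = tT + tR by rewrite (size_ordering ord_p).
have [|j [pi [pi' [-> rotE sz_pi sz_pi']]]] := @blk_rot T p l sz_p; first by rewrite sz_p.
exists (j, oplus_set T l, pi, pi') => //.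
rewrite subfile_idxE card_oplus_set card_T -rotE rot_uniq sz_pi sz_pi' !eqxx.
by case/andP: ord_p => ->.
Qed.

Lemma blk_inj (T1 T2 : {set 'I_KT}) (R1 R2 : {set 'I_KR}) p1 p2 l1 l2 :
  blk_idx tT tR T1 R1 p1 -> blk_idx tT tR T2 R2 p2 ->
  l1 < tT + tR -> l2 < tT + tR ->
  blk tT tR T1 p1 l1 = blk tT tR T2 p2 l2 ->
  [/\ T1 = T2, R1 = R2, p1 = p2 & l1 = l2].
Proof.
case/and3P=> _ /eqP card_R1 circ1; have [ord1 _] := andP circ1.
case/and3P=> _ /eqP card_R2 circ2; have [ord2 _] := andP circ2.
move=> lt1 lt2.
have sz1 : size p1 = tT + tR by rewrite (size_ordering ord1).
have sz2 : size p2 = tT + tR by rewrite (size_ordering ord2).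
have [|j1 [pi1 [pi1' [-> rot1 _ _]]]] := @blk_rot T1 p1 l1 sz1; first by rewrite sz1.
have [|j2 [pi2 [pi2' [-> rot2 _ _]]]] := @blk_rot T2 p2 l2 sz2; first by rewrite sz2.
case=> j12 oplusE pi12 pi12'; rewrite j12 pi12 pi12' -{}rot2 in rot1.
have p12 : p1 = p2 by apply: circ_perm_rot_inj circ1 circ2 _ _ rot1; rewrite ?sz1 ?sz2.
subst p2; have [_ /eqP R12] := andP ord1; have [_ /eqP R21] := andP ord2.
have l12 : l1 = l2.
  by apply: (rot_head_inj (x0 := j1) (proj1 (andP ord1))); rewrite ?sz1 ?rot1.
subst l2; split=> //; last by rewrite -R12 -R21.
exact: (can_inj (@oplus_setK KT l1) oplusE).
Qed.

Lemma blk_cover (x : item KT KR) : subfile_idx tT tR x ->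
  exists T R p l, [/\ blk_idx tT tR T R p, l < tT + tR & blk tT tR T p l = Some x].
Proof.
case: x => [[[j T] pi] pi']; rewrite subfile_idxE.
case/and4P=> /eqP card_T uniq_q /eqP sz_pi /eqP sz_pi'.
set q := j :: pi ++ pi'.
have sz_q : size q = tT + tR by rewrite /= size_cat sz_pi sz_pi'; lia.
have [|p [l [circ_p lt_l rot_p]]] := circ_perm_rot_exists uniq_q; first by [].
have sz_p : size p = tT + tR by rewrite -sz_q -(size_rot l p) rot_p.
exists (oplus_set T (KT - l %% KT)), [set y in q], p, l; split; rewrite -?sz_p //.
  by rewrite /blk_idx card_oplus_set card_T cardsE (card_uniqP uniq_q) sz_q !eqxx.
have [j' [pi1 [pi1' [-> rotE sz1 sz1']]]] := @blk_rot (oplus_set T (KT - l %% KT)) p l sz_p lt_l.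
move: rotE; rewrite rot_p oplus_setKV => /eqP; rewrite eqseq_cons eqseq_cat ?sz1 //.
by case/and3P=> /eqP <- /eqP <- /eqP <-.
Qed.

End Blocks.

Theorem lemma1 (KT KR tT tR : nat) :
  (1 <= tT)%N -> (tT + tR <= KR)%N ->
  (* every block element is a small subfile to be delivered *)
  (forall (T : {set 'I_KT}) (R : {set 'I_KR}) (p : seq 'I_KR) (l : nat), blk_idx tT tR T R p -> (l < tT + tR)%N ->
     exists2 x, blk tT tR T p l = Some x & @subfile_idx KT KR tT tR x)
  /\
  (* every small subfile to be delivered lies in some block *)
  (forall x : item KT KR, @subfile_idx KT KR tT tR x ->
     exists (T : {set 'I_KT}) (R : {set 'I_KR}) (p : seq 'I_KR) (l : nat), [/\ blk_idx tT tR T R p, (l < tT + tR)%N &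
                         blk tT tR T p l = Some x])
  /\
  (* blocks are pairwise disjoint and each has exactly tT + tR elements *)
  (forall (T1 T2 : {set 'I_KT}) (R1 R2 : {set 'I_KR}) (p1 p2 : seq 'I_KR) (l1 l2 : nat),
     blk_idx tT tR T1 R1 p1 -> blk_idx tT tR T2 R2 p2 ->
     (l1 < tT + tR)%N -> (l2 < tT + tR)%N ->
     blk tT tR T1 p1 l1 = blk tT tR T2 p2 l2 ->
     [/\ T1 = T2, R1 = R2, p1 = p2 & l1 = l2]).
Proof.
(* [tT + tR <= KR] only guarantees that blocks exist; the partition does not
   depend on it. *)
move=> tT_gt0 _; split; first exact: blk_subfile.
by split; [exact: blk_cover | exact: blk_inj].
Qed.
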